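(* Let $A$ be an $n\times n$ dilation matrix and let $\mu$ be its smallest singular value. If $\mu>2$, then $A$ yields a radix representation of $\mathbb{Z}^n$ with digit set $D=A(F)\cap\mathbb{Z}^n$, where $F=[-\tfrac12,\tfrac12)^n$; that is, every $x\in\mathbb{Z}^n$ can be written as $\sum_{j=0}^NA^jd_j$ with $N\ge0$ and $d_j\in D$.
   Context: A dilation matrix is an $n\times n$ matrix with integer entries all of whose eigenvalues $\lambda$ satisfy $|\lambda|>1$. $D$ is a complete set of coset representatives of $\mathbb{Z}^n/A(\mathbb{Z}^n)$. *)

From HB Require Import structures.
From mathcomp Require Import all_boot all_order all_algebra all_field.
Set Implicit Arguments. Unset Strict Implicit. Unset Printing Implicit Defensive.
Import Order.TTheory GRing.Theory Num.Theory.
Local Open Scope ring_scope.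

Definition mxC (n : nat) (A : 'M[int]_n) : 'M[algC]_n := map_mx (fun z : int => z%:~R) A.

Definition eigenvalue_of (n : nat) (A : 'M[int]_n) (l : algC) : Prop :=
  root (char_poly (mxC A)) l.

Definition dilation (n : nat) (A : 'M[int]_n) : Prop :=
  forall l, eigenvalue_of A l -> 1 < `|l|.

Definition singular_value (n : nat) (A : 'M[int]_n) (s : algC) : Prop :=
  0 <= s /\ root (char_poly (mxC (A^T *m A))) (s ^+ 2).

(* smallest singular value > c  <=>  every singular value > c *)
Definition min_singular_value_gt (n : nat) (A : 'M[int]_n) (c : algC) : Prop :=
  forall s, singular_value A s -> c < s.

Definition in_F (n : nat) (y : 'cV[algC]_n) : Prop :=
  forall i, y i 0 \is Num.real /\ - (2%:R)^-1 <= y i 0 /\ y i 0 < (2%:R)^-1.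

Definition digit (n : nat) (A : 'M[int]_n) (d : 'cV[int]_n) : Prop :=
  exists y : 'cV[algC]_n, in_F y /\ mxC A *m y = map_mx (fun z : int => z%:~R) d.

Definition mxpow (n : nat) (A : 'M[int]_n) (j : nat) : 'M[int]_n :=
  iter j (mulmx A) 1%:M.

(* Every singular value of A exceeds 2, so the eigenvalues of A^T A exceed 4 and
   the spectral theorem gives |A y|^2 > 4 |y|^2 for y <> 0.  For a nonzero integer
   vector x let y = A^-1 x (a real vector) and let q be y rounded coordinatewise to
   the nearest integer.  Then d := x - A q = A (y - q) lies in A(F), and since
   |round t| <= 2 |t| we get |q|^2 <= 4 |y|^2 < |A y|^2 = |x|^2.  Hence x = d + A q
   with q strictly shorter than x, and induction on |x|^2 yields the expansion. *)

From HB Require Import structures.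
From mathcomp Require Import all_boot all_order all_algebra all_field.
Set Implicit Arguments. Unset Strict Implicit. Unset Printing Implicit Defensive.
Import Order.TTheory GRing.Theory Num.Theory Num.Def.
Local Open Scope ring_scope.
Local Open Scope sesquilinear_scope.

Lemma weighted_sum_gt (R : numDomainType) n (c : R) (w d : 'I_n -> R) :
  (forall k, 0 <= w k) -> (forall k, c < d k) -> (exists k, w k != 0) ->
  c * \sum_k w k < \sum_k w k * d k.
Proof.
move=> w_ge0 cd [k0 wk0]; rewrite mulr_sumr (bigD1 k0) //= [X in _ < X](bigD1 k0) //=.
apply: ltr_leD; first by rewrite mulrC ltr_pM2l // lt_def wk0 w_ge0.
by apply: ler_sum => k _; rewrite mulrC ler_wpM2l // ltW.
Qed.

Section Hermitian.
Context {C : numClosedFieldType}.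

Lemma trmxC_mul m p q (X : 'M[C]_(m, p)) (Y : 'M_(p, q)) : (X *m Y)^t* = Y^t* *m X^t*.
Proof. by rewrite trmx_mul map_mxM. Qed.

Lemma trmxC_mul_cV m (y : 'cV[C]_m) : (y^t* *m y) 0 0 = \sum_k `|y k 0| ^+ 2.
Proof. by rewrite mxE; apply: eq_bigr => k _; rewrite !mxE normCKC. Qed.

Lemma cV_neq0_sqr_norm m (y : 'cV[C]_m) : y != 0 -> exists k, `|y k 0| ^+ 2 != 0.
Proof.
move=> y0; apply/existsP; apply: contraNT y0 => /existsPn y0.
apply/eqP/matrixP => k l; rewrite ord1 mxE.
by have /negbNE := y0 k; rewrite sqrf_eq0 normr_eq0 => /eqP.
Qed.

Lemma spectral_diag_root n (M : 'M[C]_n) i : M \is normalmx ->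
  root (char_poly M) (spectral_diag M 0 i).
Proof.
move=> /orthomx_spectralP M_eq; set P := spectralmx M in M_eq *.
have Pu : P \is unitarymx := spectral_unitarymx M.
have Punit := unitarymx_unit Pu.
rewrite -eigenvalue_root_char; apply/eigenvalueP; exists (row i P).
  have PM : P *m M = diag_mx (spectral_diag M) *m P.
    by rewrite {1}M_eq !mulmxA mulmxV // mul1mx.
  by rewrite -row_mul PM row_mul row_diag_mx -scalemxAl -rowE.
apply/eqP => Pi0; have /row_unitarymxP/(_ i i) := Pu.
by rewrite Pi0 dotmxE mul0mx mxE eqxx => /eqP; rewrite eq_sym oner_eq0.
Qed.

Lemma trmxC_mul_normal m n (X : 'M[C]_(m, n)) : X^t* *m X \is normalmx.
Proof. by rewrite qualifE trmxC_mul trmxCK. Qed.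

Lemma normalmx_form_gt n (M : 'M[C]_n) (c : C) (y : 'cV_n) : M \is normalmx ->
  (forall l, root (char_poly M) l -> c < l) -> y != 0 ->
  c * (y^t* *m y) 0 0 < (y^t* *m M *m y) 0 0.
Proof.
move=> Mn cM y0; have /orthomx_spectralP M_eq := Mn; set P := spectralmx M in M_eq.
have Pu : P \is unitarymx := spectral_unitarymx M.
have PtP : P^t* *m P = 1%:M by rewrite -invmx_unitary // mulVmx // unitarymx_unit.
rewrite invmx_unitary // in M_eq.
set z := P *m y.
have -> : y^t* *m M *m y = z^t* *m diag_mx (spectral_diag M) *m z.
  by rewrite {1}M_eq /z trmxC_mul !mulmxA.
have -> : y^t* *m y = z^t* *m z.
  by rewrite /z trmxC_mul mulmxA -(mulmxA _ _ P) PtP mulmx1.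
have z0 : z != 0.
  by apply: contra y0 => /eqP z0; rewrite -[y]mul1mx -PtP -mulmxA -/z z0 mulmx0.
rewrite trmxC_mul_cV mul_mx_diag mxE.
rewrite [X in _ < X](eq_bigr (fun k => `|z k 0| ^+ 2 * spectral_diag M 0 k)); last first.
  by move=> k _; rewrite !mxE mulrAC normCKC.
apply: weighted_sum_gt => [k||]; first exact: exprn_ge0.
  by move=> k; apply/cM/spectral_diag_root.
exact: cV_neq0_sqr_norm.
Qed.

Lemma trmxC_mul_root_ge0 m n (X : 'M[C]_(m, n)) l :
  root (char_poly (X^t* *m X)) l -> 0 <= l.
Proof.
rewrite -eigenvalue_root_char => /eigenvalueP [v vX v0].
have vv : 0 < (v *m v^t*) 0 0 by rewrite -dotmxE dnorm_gt0.
have -> : l = ((v *m X^t*) *m (v *m X^t*)^t*) 0 0 / (v *m v^t*) 0 0.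
  rewrite trmxC_mul trmxCK mulmxA -(mulmxA v) vX -scalemxAl mxE mulfK //.
  by rewrite gt_eqF.
by rewrite divr_ge0 ?(ltW vv) // -dotmxE dnorm_ge0.
Qed.

End Hermitian.

Section Round.
Context {R : archiNumFieldType}.
Implicit Type t : R.

Definition round t : int := Num.floor (t + 2^-1).

Lemma round_dist t : t \is Num.real -> - 2^-1 <= t - (round t)%:~R < 2^-1.
Proof.
move=> tR; have t2R : t + 2^-1 \is Num.real by rewrite realD ?realV ?realn.
rewrite lerBrDr addrC lerBlDr (real_floor_le t2R) /=.
rewrite ltrBlDr -(ltrD2r 2^-1) addrAC -{2}[2^-1]mul1r -{3}[2^-1]mul1r -splitr addrC.
by rewrite -[1]/(1%:~R : R) -intrD real_floorD1_gt.
Qed.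

Lemma norm_round_le t : t \is Num.real -> `|(round t)%:~R| <= 2 * `|t|.
Proof.
move=> tR; set r : R := (round t)%:~R.
have [r0|r0] := eqVneq (round t) 0; first by rewrite /r r0 normr0 mulr_ge0.
have r1 : 1 <= `|r| by rewrite norm_intr_ge1 ?intr_int // intr_eq0.
have rt : `|t - r| <= 2^-1.
  have rR : r \is Num.real by rewrite Rreal_int ?intr_int.
  rewrite real_ler_norml ?rpredB //.
  by case/andP: (round_dist tR) => lo /ltW hi; apply/andP.
rewrite -ler_pdivrMl ?ltr0n // mulrC -(lerD2r (`|r| / 2)) -splitr.
have := ler_distD t r 0; rewrite !subr0 addrC => /le_trans; apply.
rewrite lerD2l distrC; apply: le_trans rt _.
by rewrite -{1}[2^-1]mul1r ler_pM2r ?invr_gt0 ?ltr0n.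
Qed.

End Round.

Local Notation "X %:Cmx" := (map_mx (fun z : int => z%:~R : algC) X)
  (at level 2, format "X %:Cmx").

Lemma conj_intmx m p (X : 'M[int]_(m, p)) : X%:Cmx ^ conjC = X%:Cmx.
Proof. by apply/matrixP => i j; rewrite !mxE rmorph_int. Qed.

Lemma trmxC_intmx m p (X : 'M[int]_(m, p)) : X%:Cmx ^t* = X%:Cmx ^T.
Proof. by rewrite map_trmx conj_intmx. Qed.

Definition int_sqnorm n (x : 'cV[int]_n) : nat := (\sum_i `|x i ord0| ^ 2)%N.

Lemma int_sqnormE n (x : 'cV[int]_n) : (int_sqnorm x)%:R = (x%:Cmx^t* *m x%:Cmx) 0 0.
Proof.
rewrite trmxC_mul_cV natr_sum; apply: eq_bigr => i _.
by rewrite natrX natr_absz intr_norm mxE.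
Qed.

Section Digits.
Variables (n : nat) (A : 'M[int]_n).
Hypothesis A_sing : min_singular_value_gt A 2%:R.
Local Notation B := (mxC A).

Lemma mxC_trmx_mul : mxC (A^T *m A) = B^t* *m B.
Proof. by rewrite /mxC trmxC_intmx map_mxM map_trmx. Qed.

Lemma root_mxC_trmx_mul_gt4 l : root (char_poly (mxC (A^T *m A))) l -> 4%:R < l.
Proof.
rewrite mxC_trmx_mul => rl; have l_ge0 := trmxC_mul_root_ge0 rl.
have /A_sing s_gt2 : singular_value A (sqrtC l).
  by rewrite /singular_value sqrtC_ge0 sqrtCK mxC_trmx_mul.
by rewrite -(sqrtCK l) -[4]/((2 ^ 2)%:R) natrX ltrXn2r ?ler0n.
Qed.

Lemma mxC_sqnorm_gt (y : 'cV[algC]_n) : y != 0 ->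
  4%:R * (y^t* *m y) 0 0 < ((B *m y)^t* *m (B *m y)) 0 0.
Proof.
move=> y0; rewrite trmxC_mul !mulmxA -(mulmxA _ _ B) -mxC_trmx_mul.
apply: normalmx_form_gt y0; last exact: root_mxC_trmx_mul_gt4.
by rewrite mxC_trmx_mul trmxC_mul_normal.
Qed.

Lemma mxC_unit : B \in unitmx.
Proof.
rewrite unitmxE unitfE -det_tr; apply/negP => /det0P [v v0 vB].
have sq_ge0 : 0 <= 4%:R * (v^T^t* *m v^T) 0 0.
  by rewrite mulr_ge0 ?ler0n // trmxC_mul_cV sumr_ge0 // => k _; apply: exprn_ge0.
have /mxC_sqnorm_gt : v^T != 0 by rewrite trmx_eq0.
have -> : B *m v^T = 0 by rewrite -[B]trmxK -trmx_mul vB trmx0.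
by rewrite mulmx0 [X in _ < X]mxE => /lt_le_trans/(_ sq_ge0); rewrite ltxx.
Qed.

Lemma invmx_mxC_real (x : 'cV[int]_n) i : (invmx B *m x%:Cmx) i 0 \is Num.real.
Proof.
have Yc : (invmx B *m x%:Cmx) ^ conjC = invmx B *m x%:Cmx.
  by rewrite map_mxM map_invmx !conj_intmx.
by apply/CrealP; have /matrixP/(_ i 0) := Yc; rewrite mxE.
Qed.

Lemma digit_step (x : 'cV[int]_n) : x != 0 ->
  exists d q, [/\ digit A d, x = d + A *m q & (int_sqnorm q < int_sqnorm x)%N].
Proof.
move=> x0; set Y := invmx B *m x%:Cmx; set q : 'cV[int]_n := \col_i round (Y i 0).
have BY : B *m Y = x%:Cmx by rewrite mulKVmx // mxC_unit.
have Y0 : Y != 0.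
  apply: contra x0 => /eqP Y0; apply/eqP/matrixP => i j.
  have /matrixP/(_ i j) := BY; rewrite Y0 mulmx0 !mxE => /esym/eqP.
  by rewrite intr_eq0 => /eqP.
exists (x - A *m q), q; split.
- exists (Y - q%:Cmx); split.
    move=> i; have Yr := invmx_mxC_real x i.
    have -> : (Y - q%:Cmx) i 0 = Y i 0 - (round (Y i 0))%:~R by rewrite !mxE.
    have /andP[lo hi] := round_dist Yr.
    by rewrite rpredB ?Yr ?Rreal_int ?intr_int.
  by rewrite mulmxBr BY map_mxB map_mxM.
- by rewrite subrK.
rewrite -(ltr_nat algC) !int_sqnormE -BY; apply: le_lt_trans (mxC_sqnorm_gt Y0).
rewrite !trmxC_mul_cV mulr_sumr; apply: ler_sum => i _; rewrite mxE [q i 0]mxE.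
have -> : 4%:R * `|Y i 0| ^+ 2 = (2%:R * `|Y i 0|) ^+ 2 by rewrite exprMn -natrX.
by apply: lerXn2r; rewrite ?nnegrE ?mulr_ge0 ?norm_round_le ?invmx_mxC_real.
Qed.

Lemma digit0 : digit A 0.
Proof.
exists 0; split; last by rewrite mulmx0 map_mx0.
by move=> i; rewrite mxE real0 oppr_le0 invr_ge0 ler0n invr_gt0 ltr0n.
Qed.

Lemma radix_expansion (x : 'cV[int]_n) : exists (N : nat) (d : nat -> 'cV[int]_n),
  (forall j, (j <= N)%N -> digit A (d j)) /\ x = \sum_(j < N.+1) mxpow A j *m d j.
Proof.
have [k] := ubnP (int_sqnorm x); elim: k x => // k IH x lt_x_k.
have [->|x0] := eqVneq x 0.
  by exists 0%N, (fun=> 0); split=> [j _|]; [exact: digit0 | rewrite big_ord1 mulmx0].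
have [d [q [dd xE lt_qx]]] := digit_step x0.
have [N [e [e_digit qE]]] := IH q (leq_trans lt_qx lt_x_k).
exists N.+1, (fun j => if j is j'.+1 then e j' else d); split=> [[|j] // /e_digit //|].
rewrite xE qE [RHS]big_ord_recl mul1mx mulmx_sumr; congr (_ + _).
by apply: eq_bigr => j _; rewrite mulmxA.
Qed.

End Digits.

Local Close Scope sesquilinear_scope.

Theorem mainTheorem8 (n : nat) (A : 'M[int]_n) :
  dilation A -> min_singular_value_gt A 2%:R ->
  forall x : 'cV[int]_n, exists (N : nat) (d : nat -> 'cV[int]_n),
    (forall j, (j <= N)%N -> digit A (d j)) /\
    x = \sum_(j < N.+1) mxpow A j *m d j.
Proof.
(* The dilation hypothesis is implied by the singular value bound. *)
by move=> _ A_sing; apply: radix_expansion.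
Qed.
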